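(* Let $|\psi_{{\sf A}{\sf B}}\rangle\in\mathbb C^{d_{\sf A}}\otimes\mathbb C^{d_{\sf B}}$ be a unit vector and $\hat F_{\sf B}=\sum_i\alpha_i|\phi_i\rangle\langle\phi_i|^{\otimes2}$ with unit vectors $\phi_i\in\mathbb C^{d_{\sf B}}$ and $\alpha_i>0$ (acting on factors $2,4$). Define $\bar\omega_{{\sf A}|F_{\sf B}}=\mathrm{tr}_{\sf B}\big(S_{\sf A}\hat F_{\sf B}|\psi_{{\sf A}{\sf B}}\rangle\langle\psi_{{\sf A}{\sf B}}|^{\otimes2}\big)+\mathrm{tr}\big(|\psi_{{\sf A}{\sf B}}\rangle\langle\psi_{{\sf A}{\sf B}}|^{\otimes2}A_{\sf A}A_{\sf B}\big)\frac{\mathrm{tr}(\hat F_{\sf B})}{\mathrm{tr}(S_{\sf B})}\tilde S_{\sf A}$, and, when $\mathrm{tr}(\bar\omega_{{\sf A}|F_{\sf B}})>0$, the normalised conditional state $\tilde\omega_{{\sf A}|F_{\sf B}}=\bar\omega_{{\sf A}|F_{\sf B}}/\mathrm{tr}(\bar\omega_{{\sf A}|F_{\sf B}})$. Then $\tilde\omega_{{\sf A}|F_{\sf B}}$ belongs to the convex hull of $\{|\varphi\rangle\langle\varphi|^{\otimes2}:\varphi\in\mathbb C^{d_{\sf A}},\ \|\varphi\|=1\}$.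
   Context: $|\psi_{{\sf A}{\sf B}}\rangle^{\otimes2}$ is regarded as a vector in $\mathbb C^{d_{\sf A}}_1\otimes\mathbb C^{d_{\sf B}}_2\otimes\mathbb C^{d_{\sf A}}_3\otimes\mathbb C^{d_{\sf B}}_4$; $\mathrm{tr}_{\sf B}$ is the partial trace over factors $2,4$. $S_{\sf A}$, $A_{\sf A}$ are the projectors onto the symmetric and antisymmetric subspaces of $\mathbb C^{d_{\sf A}}_1\otimes\mathbb C^{d_{\sf A}}_3$; $S_{\sf B}$, $A_{\sf B}$ those of $\mathbb C^{d_{\sf B}}_2\otimes\mathbb C^{d_{\sf B}}_4$ (extended by identities where needed); $\tilde S_{\sf A}=S_{\sf A}/\mathrm{tr}S_{\sf A}$. *)

From HB Require Import structures.
From mathcomp Require Import all_boot all_order all_algebra all_field.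
Set Implicit Arguments. Unset Strict Implicit. Unset Printing Implicit Defensive.
Import Order.TTheory GRing.Theory Num.Theory.
Local Open Scope ring_scope.

(* Operators on the Hilbert space C^I (I a finite index set), as kernels. *)
Definition op (I : finType) := I -> I -> algC.

Definition opmul (I : finType) (X Y : op I) : op I :=
  fun i j => \sum_k X i k * Y k j.
Definition optr (I : finType) (X : op I) : algC := \sum_i X i i.
Definition opscale (I : finType) (c : algC) (X : op I) : op I :=
  fun i j => c * X i j.
Definition opadd (I : finType) (X Y : op I) : op I := fun i j => X i j + Y i j.
Definition opid (I : finType) : op I := fun i j => (i == j)%:R.

Definition unitvec (I : finType) (v : I -> algC) : Prop :=
  \sum_i `|v i| ^+ 2 = 1.
Definition ketbra (I : finType) (v : I -> algC) : op I :=
  fun i j => v i * (v j)^*.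
Definition vec2 (I : finType) (v : I -> algC) : (I * I)%type -> algC :=
  fun p => v p.1 * v p.2.

Definition swapop (I : finType) : op (I * I)%type :=
  fun p q => ((p.1 == q.2) && (p.2 == q.1))%:R.
Definition symP (I : finType) : op (I * I)%type :=
  fun p q => (@opid _ p q + swapop p q) / 2%:R.
Definition antiP (I : finType) : op (I * I)%type :=
  fun p q => (@opid _ p q - swapop p q) / 2%:R.

(* Full space C^A_1 (x) C^B_2 (x) C^A_3 (x) C^B_4, indexed by ((a1,b2),(a3,b4)).
   liftAB X Y = X acting on factors 1,3 tensored with Y acting on factors 2,4. *)
Definition liftAB (A B : finType) (X : op (A * A)%type) (Y : op (B * B)%type)
  : op ((A * B) * (A * B))%type :=
  fun x y => X (x.1.1, x.2.1) (y.1.1, y.2.1) * Y (x.1.2, x.2.2) (y.1.2, y.2.2).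

Definition ptrB (A B : finType) (Z : op ((A * B) * (A * B))%type) : op (A * A)%type :=
  fun p q => \sum_(b : B * B) Z ((p.1, b.1), (p.2, b.2)) ((q.1, b.1), (q.2, b.2)).

Definition Fhat (n N : nat) (alpha : 'I_N -> algC) (phi : 'I_N -> 'I_n -> algC)
  : op ('I_n * 'I_n)%type :=
  fun p q => \sum_i alpha i * ketbra (vec2 (phi i)) p q.

Definition omegabar (m n N : nat) (psi : ('I_m * 'I_n)%type -> algC)
  (alpha : 'I_N -> algC) (phi : 'I_N -> 'I_n -> algC) : op ('I_m * 'I_m)%type :=
  let rho := ketbra (vec2 psi) in
  let F := Fhat alpha phi in
  let SA := @symP 'I_m in
  let SB := @symP 'I_n in
  let AA := @antiP 'I_m in
  let AB := @antiP 'I_n in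
  let SAt := opscale (optr SA)^-1 SA in
  opadd (ptrB (opmul (opmul (liftAB SA (@opid _)) (liftAB (@opid _) F)) rho))
        (opscale (optr (opmul rho (opmul (liftAB AA (@opid _)) (liftAB (@opid _) AB)))
                  * optr F / optr SB) SAt).

Definition in_sym_sep_hull (m : nat) (X : op ('I_m * 'I_m)%type) : Prop :=
  exists (K : nat) (w : 'I_K -> algC) (v : 'I_K -> 'I_m -> algC),
    [/\ (forall k, 0 <= w k), \sum_k w k = 1, (forall k, unitvec (v k)) &
        forall p q, X p q = \sum_k w k * ketbra (vec2 (v k)) p q].

(* Both summands of [omegabar] are nonnegative combinations of operators [|v><v|^(x)2].
   Since [S_A] fixes every [u (x) u], the first summand is [\sum_i alpha_i |u_i><u_i|^(x)2]
   with [u_i = (1 (x) <phi_i|) psi].  The second is a multiple of [S_A] with a nonnegative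
   coefficient, [tr(rho A_A A_B)] being the expectation of a positive operator, and [S_A] is
   itself such a combination: averaging [|v_f><v_f|^(x)2] over the phase vectors
   [v_f = (z ^ f(a))_a], with [z] a primitive cube root of unity, kills every entry except
   those whose row and column index pairs agree as multisets, so that
   [S_A = 1/2 (phase average) + 1/2 \sum_a |a a><a a|].  Each [|v><v|^(x)2] with [v] a unit
   vector has trace one, so dividing by the trace yields a convex combination. *)

From mathcomp Require Import all_boot all_order all_algebra all_field.
From mathcomp Require Import ring.
Import Order.TTheory GRing.Theory Num.Theory.
Local Open Scope ring_scope.
Set Implicit Arguments. Unset Strict Implicit. Unset Printing Implicit Defensive.

Lemma sum_pairE (I J : finType) (F : I * J -> algC) :
  \sum_p F p = \sum_i \sum_j F (i, j).
Proof. by rewrite pair_bigA; apply: eq_bigr => -[]. Qed.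

Lemma sum_delta (I : finType) (i : I) (G : I -> algC) : \sum_j (i == j)%:R * G j = G i.
Proof.
rewrite (bigD1 i) //= eqxx mul1r big1 ?addr0 // => j.
by rewrite eq_sym => /negPf->; rewrite mul0r.
Qed.

Definition symsep_cone (I : finType) (X : op (I * I)%type) : Prop :=
  exists (K : nat) (w : 'I_K -> algC) (v : 'I_K -> I -> algC),
    [/\ (forall k, 0 <= w k), (forall k, unitvec (v k)) &
        forall p q, X p q = \sum_k w k * ketbra (vec2 (v k)) p q].

Section SymSepCone.

Variable I : finType.
Implicit Types (X Y : op (I * I)%type) (v : I -> algC).

Lemma symsep_cone_ext X Y : (forall p q, X p q = Y p q) -> symsep_cone Y -> symsep_cone X.
Proof.
by move=> eXY [K [w [v [w_ge0 v_unit eY]]]]; exists K, w, v; split=> // p q; rewrite eXY eY.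
Qed.

Lemma symsep_cone0 : symsep_cone (fun _ _ : I * I => 0).
Proof.
exists 0%N, (fun _ => 0), (fun _ _ => 0); split=> [[]|[]|p q] //.
by rewrite big_ord0.
Qed.

Lemma symsep_coneD X Y :
  symsep_cone X -> symsep_cone Y -> symsep_cone (fun p q => X p q + Y p q).
Proof.
move=> [K1 [w1 [v1 [w1_ge0 v1_unit eX]]]] [K2 [w2 [v2 [w2_ge0 v2_unit eY]]]].
pose glue T (f1 : 'I_K1 -> T) (f2 : 'I_K2 -> T) k :=
  match split k with inl i => f1 i | inr j => f2 j end.
exists (K1 + K2)%N, (glue _ w1 w2), (glue _ v1 v2); split.
- by move=> k; rewrite /glue; case: (split k).
- by move=> k; rewrite /glue; case: (split k).
move=> p q; rewrite big_split_ord eX eY /glue.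
congr (_ + _); apply: eq_bigr => i _.
  by rewrite (unsplitK (inl i : 'I_K1 + 'I_K2)).
by rewrite (unsplitK (inr i : 'I_K1 + 'I_K2)).
Qed.

Lemma symsep_coneZ (c : algC) X :
  0 <= c -> symsep_cone X -> symsep_cone (fun p q => c * X p q).
Proof.
move=> c_ge0 [K [w [v [w_ge0 v_unit eX]]]]; exists K, (fun k => c * w k), v.
split=> [k|//|p q]; first by rewrite mulr_ge0.
by rewrite eX mulr_sumr; apply: eq_bigr => k _; rewrite mulrA.
Qed.

Lemma symsep_cone_sum (T : Type) (s : seq T) (F : T -> op (I * I)%type) :
  (forall t, symsep_cone (F t)) -> symsep_cone (fun p q => \sum_(t <- s) F t p q).
Proof.
move=> F_cone; elim: s => [|t s IHs].
  by apply: symsep_cone_ext symsep_cone0 => p q; rewrite big_nil.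
by apply: symsep_cone_ext (symsep_coneD (F_cone t) IHs) => p q; rewrite big_cons.
Qed.

(* [v (x) v] is [|v|^4] times the square of the normalised vector [v / |v|]. *)
Lemma symsep_cone_ketbra (c : algC) v :
  0 <= c -> symsep_cone (fun p q => c * ketbra (vec2 v) p q).
Proof.
move=> c_ge0; set nv := \sum_i `|v i| ^+ 2.
have nv_ge0 : 0 <= nv by apply: sumr_ge0 => i _; rewrite exprn_ge0.
have [nv0|nv_neq0] := eqVneq nv 0.
  have v0 i : v i = 0.
    move/eqP: nv0; rewrite psumr_eq0 => [/allP/(_ i (mem_index_enum i))|j _].
      by rewrite expf_eq0 normr_eq0 => /andP[_ /eqP].
    by rewrite exprn_ge0.
  by apply: symsep_cone_ext symsep_cone0 => p q; rewrite /ketbra /vec2 !v0 !mul0r mulr0.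
set s := sqrtC nv.
have s_neq0 : s != 0 by rewrite sqrtC_eq0.
have s_real : s^* = s by rewrite geC0_conj // sqrtC_ge0.
have s2 : s ^+ 2 = nv by rewrite sqrtCK.
exists 1%N, (fun _ => c * nv ^+ 2), (fun _ i => v i / s); split.
- by move=> _; rewrite mulr_ge0 // exprn_ge0.
- move=> _; rewrite /unitvec.
  under eq_bigr => i _ do rewrite normrM exprMn normfV.
  by rewrite -mulr_suml -/nv exprVn normCK s_real -expr2 s2 mulfV.
move=> p q; rewrite big_ord1 /ketbra /vec2 !rmorphM /= !fmorphV /= s_real -s2.
by field.
Qed.

Lemma optr_ketbra_vec2 v :
  unitvec v -> optr (ketbra (vec2 v)) = 1.
Proof.
rewrite /unitvec /optr => v_unit; rewrite sum_pairE.
transitivity ((\sum_i `|v i| ^+ 2) * (\sum_i `|v i| ^+ 2)); last by rewrite v_unit mulr1.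
rewrite mulr_suml; apply: eq_bigr => i _; rewrite mulr_sumr; apply: eq_bigr => j _.
by rewrite /ketbra /vec2 /= !normCK rmorphM /=; ring.
Qed.

End SymSepCone.

Lemma symsep_cone_normalized m (X : op ('I_m * 'I_m)%type) :
  symsep_cone X -> 0 < optr X -> in_sym_sep_hull (opscale (optr X)^-1 X).
Proof.
move=> [K [w [v [w_ge0 v_unit eX]]]] trX_gt0.
have trX : optr X = \sum_k w k.
  rewrite /optr; under eq_bigr => p _ do rewrite eX.
  rewrite exchange_big /=; apply: eq_bigr => k _.
  by rewrite -mulr_sumr -/(optr _) optr_ketbra_vec2 ?mulr1.
exists K, (fun k => (optr X)^-1 * w k), v; split=> //.
- by move=> k; rewrite mulr_ge0 // invr_ge0 ltW.
- by rewrite -mulr_sumr -trX mulVf // lt0r_neq0.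
by move=> p q; rewrite /opscale eX mulr_sumr; apply: eq_bigr => k _; rewrite mulrA.
Qed.

Lemma perm_eq_pair (T : eqType) (p1 p2 q1 q2 : T) :
  perm_eq [:: p1; p2] [:: q1; q2] = ((p1, p2) == (q1, q2)) || ((p1, p2) == (q2, q1)).
Proof.
have swap_q : perm_eq [:: q2; q1] [:: q1; q2].
  exact/permPl/(perm_catC [:: q2] [:: q1]).
apply/idP/idP => [pp|/orP[]/eqP[-> ->] //].
have : p1 \in [:: q1; q2] by rewrite -(perm_mem pp) mem_head.
rewrite mem_seq2 => /orP[]/eqP e1.
  by move: pp; rewrite e1 perm_cons => /perm_small_eq-/(_ isT)[->]; rewrite eqxx.
move: pp; rewrite -(permPr swap_q) e1 perm_cons => /perm_small_eq-/(_ isT)[->].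
by rewrite eqxx orbT.
Qed.

Lemma sum_expr_prim_root (R : idomainType) n (z : R) e :
  n.-primitive_root z -> \sum_(k < n) z ^+ (e * k) = if (n %| e)%N then n%:R else 0.
Proof.
move=> prim_z; rewrite (prim_order_dvd prim_z); under eq_bigr => k _ do rewrite exprM.
have [/eqP ze1|ze_neq1] := ifPn.
  by rewrite (eq_bigr (fun=> 1)) => [|k _]; rewrite ?sumr_const ?card_ord ?ze1 ?expr1n.
have : (z ^+ e) ^+ n - 1 == 0 by rewrite -exprM mulnC exprM (prim_expr_order prim_z) expr1n subrr.
by rewrite subrX1 mulf_eq0 subr_eq0 (negPf ze_neq1) => /eqP.
Qed.

Lemma conjC_unity_root n (z : algC) : (0 < n)%N -> z ^+ n = 1 -> z^* = z ^+ n.-1.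
Proof.
move=> n_gt0 zn1.
have nz1 : `|z| = 1 by apply/eqP; rewrite -(pexpr_eq1 n_gt0) // -normrX zn1 normr1.
have z_neq0 : z != 0 by rewrite -normr_eq0 nz1 oner_neq0.
apply: (mulfI z_neq0); rewrite -exprS prednK // zn1 -normCK nz1.
by rewrite expr1n.
Qed.

Lemma dvdn_add_predn_mul n c1 c2 :
  (c1 < n)%N -> (c2 < n)%N -> (n %| c1 + n.-1 * c2)%N = (c1 == c2).
Proof.
move=> c1_lt c2_lt; have n_gt0 : (0 < n)%N by apply: leq_ltn_trans c1_lt.
rewrite /dvdn -[0%N](mod0n n) -(eqn_modDr c2) add0n -addnA -mulSnr prednK //.
by rewrite mulnC addnC modnMDl !modn_small.
Qed.

Lemma sum_count_mem (I : finType) (s : seq I) (g : I -> nat) :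
  (\sum_x count_mem x s * g x = \sum_(y <- s) g y)%N.
Proof.
elim: s => [|y s IHs]; first by rewrite big_nil big1.
rewrite big_cons -IHs.
transitivity (\sum_x ((y == x) * g x + count_mem x s * g x))%N.
  by apply: eq_bigr => x _; rewrite /= mulnDl.
rewrite big_split /= (bigD1 y) //= eqxx mul1n big1 ?addn0 // => x /negPf.
by rewrite eq_sym => ->.
Qed.

Section PhaseAverage.

Variables (I : finType) (n : nat) (z : algC).
Hypotheses (prim_z : n.-primitive_root z) (n_gt2 : (2 < n)%N).

Definition phase_vec (f : {ffun I -> 'I_n}) (a : I) : algC := z ^+ f a.

(* Since [z^* = z ^+ n.-1], the entry [(p, q)] of [|v_f><v_f|^(x)2] is [z] raised to
   [\sum_x pair_exp p q x * f x]. *)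
Let pair_exp (p q : I * I) (x : I) : nat :=
  (count_mem x [:: p.1; p.2] + n.-1 * count_mem x [:: q.1; q.2])%N.

Lemma ketbra_phase_vec f p q :
  ketbra (vec2 (phase_vec f)) p q = \prod_x z ^+ (pair_exp p q x * f x).
Proof.
have n_gt0 : (0 < n)%N by apply: leq_trans n_gt2.
rewrite prodrXr; under eq_bigr => x _ do rewrite mulnDl -mulnA.
rewrite big_split -big_distrr !sum_count_mem !big_cons !big_nil !addn0.
rewrite exprD exprM -(conjC_unity_root n_gt0 (prim_expr_order prim_z)).
by rewrite /ketbra /vec2 /phase_vec -!exprD rmorphXn.
Qed.

Lemma sum_ketbra_phase_vec p q :
  \sum_f ketbra (vec2 (phase_vec f)) p q
    = n%:R ^+ #|I| * (perm_eq [:: p.1; p.2] [:: q.1; q.2])%:R.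
Proof.
under eq_bigr do rewrite ketbra_phase_vec.
rewrite -(bigA_distr_bigA (fun x (k : 'I_n) => z ^+ (pair_exp p q x * k))) /=.
under eq_bigr do rewrite sum_expr_prim_root //.
(* Counts in a pair are below [n], so [n] divides [pair_exp p q x] iff [x] occurs as
   often in [p] as in [q]. *)
have count_lt x (s : seq I) : size s = 2%N -> (count_mem x s < n)%N.
  by move=> s2; apply: leq_ltn_trans n_gt2; rewrite -s2 count_size.
have [pq|npq] := boolP (perm_eq _ _).
  rewrite mulr1 -prodr_const; apply: eq_bigr => x _.
  by rewrite /pair_exp dvdn_add_predn_mul ?count_lt // (permP pq) eqxx.
have [x _ /= /negPf cx] := allPn npq.
by rewrite mulr0 (bigD1 x) //= /pair_exp dvdn_add_predn_mul ?count_lt // cx mul0r.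
Qed.

End PhaseAverage.

Lemma sum_ketbra_basis (I : finType) (p q : I * I) :
  \sum_a ketbra (vec2 (fun i => (i == a)%:R)) p q = ((p == q) && (p == (q.2, q.1)))%:R.
Proof.
case: p q => [p1 p2] [q1 q2]; rewrite /ketbra /vec2 /=.
under eq_bigr do rewrite rmorphM /= !conjC_nat -!natrM.
rewrite -natr_sum (bigD1 p1) //= big1 => [|a /negPf]; last by rewrite eq_sym => ->.
rewrite eqxx addn0 !xpair_eqE mul1n !mulnb; congr (nat_of_bool _)%:R.
by apply/idP/idP => [/and3P[/eqP-> /eqP-> /eqP->]|/and3P[/andP[/eqP<- /eqP<-] /eqP<- _]];
  rewrite !eqxx.
Qed.

Lemma symP_symsep_cone (I : finType) : symsep_cone (@symP I).
Proof.
have [z prim_z] := C_prim_root_exists (isT : (0 < 3)%N).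
pose c : algC := (2 * 3%:R ^+ #|I|)^-1.
have c3 : c * 3%:R ^+ #|I| = 2^-1.
  by rewrite /c invfM -mulrA mulVf ?mulr1 // expf_neq0 // pnatr_eq0.
apply: (symsep_cone_ext (Y := fun p q =>
    \sum_a 2^-1 * ketbra (vec2 (fun i => (i == a)%:R)) p q
  + \sum_(f : {ffun I -> 'I_3}) c * ketbra (vec2 (phase_vec z f)) p q)).
  move=> p q; rewrite -!mulr_sumr sum_ketbra_basis (sum_ketbra_phase_vec prim_z) //.
  rewrite mulrA c3 -mulrDr mulrC /symP /opid /swapop.
  case: p q => [p1 p2] [q1 q2]; rewrite perm_eq_pair /= -[(p1 == q2) && _]xpair_eqE.
  by case: (_ == (q1, q2)); case: (_ == (q2, q1)); rewrite /= ?addr0 ?add0r.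
apply: symsep_coneD; apply: symsep_cone_sum => t; apply: symsep_cone_ketbra.
  by rewrite invr_ge0 ler0n.
by rewrite invr_ge0 mulr_ge0 ?exprn_ge0 ?ler0n.
Qed.

Section PartialTrace.

Variables A B : finType.
Implicit Types (X : op (A * A)%type) (Y : op (B * B)%type) (Z : op ((A * B) * (A * B))%type).

Lemma liftAB_mul_id X Y x y :
  opmul (liftAB X (@opid (B * B)%type)) (liftAB (@opid (A * A)%type) Y) x y = liftAB X Y x y.
Proof.
rewrite /opmul (bigD1 ((y.1.1, x.1.2), (y.2.1, x.2.2))) //= big1.
  by rewrite /liftAB /opid /= !eqxx mulr1 mul1r addr0.
move=> [[a1 b1] [a2 b2]] k_neq; rewrite /liftAB /opid /=.
case: (eqVneq (x.1.2, x.2.2) (b1, b2)) => [[e1 e2]|_]; last by rewrite mulr0 mul0r.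
case: (eqVneq (a1, a2) (y.1.1, y.2.1)) => [[e3 e4]|_]; last by rewrite mul0r mulr0.
by move: k_neq; rewrite e1 e2 e3 e4 eqxx.
Qed.

Lemma sum_tensor2 (G : (A * B) * (A * B) -> algC) :
  \sum_k G k = \sum_(ka : A * A) \sum_(kb : B * B) G ((ka.1, kb.1), (ka.2, kb.2)).
Proof.
transitivity (\sum_a1 \sum_b1 \sum_a2 \sum_b2 G ((a1, b1), (a2, b2))).
  rewrite !sum_pairE; apply: eq_bigr => a1 _; apply: eq_bigr => b1 _.
  by rewrite sum_pairE.
rewrite sum_pairE; apply: eq_bigr => a1 _; rewrite exchange_big; apply: eq_bigr => a2 _.
by rewrite sum_pairE.
Qed.

Lemma ptrB_liftAB_mul X Y Z p q :
  ptrB (opmul (liftAB X Y) Z) p q =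
  \sum_ka X p ka * \sum_b \sum_kb Y b kb * Z ((ka.1, kb.1), (ka.2, kb.2)) ((q.1, b.1), (q.2, b.2)).
Proof.
rewrite /ptrB /opmul; under eq_bigr do rewrite sum_tensor2.
rewrite exchange_big; apply: eq_bigr => -[a1 a2] _; rewrite mulr_sumr.
apply: eq_bigr => -[b1 b2] _; rewrite mulr_sumr; apply: eq_bigr => -[c1 c2] _.
by case: p => p1 p2; rewrite /liftAB /= mulrA.
Qed.

End PartialTrace.

Definition contractB (A B : finType) (Psi : A * B -> algC) (ph : B -> algC) (a : A) : algC :=
  \sum_c (ph c)^* * Psi (a, c).

Lemma vec2_contractB (A B : finType) (Psi : A * B -> algC) (ph : B -> algC) a :
  vec2 (contractB Psi ph) a = \sum_kb (vec2 ph kb)^* * vec2 Psi ((a.1, kb.1), (a.2, kb.2)).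
Proof.
rewrite /vec2 /contractB big_distrlr pair_bigA /=; apply: eq_bigr => kb _.
by rewrite rmorphM /=; ring.
Qed.

Lemma Fhat_contractB (A : finType) n N (alpha : 'I_N -> algC) (phi : 'I_N -> 'I_n -> algC)
    (Psi : A * 'I_n -> algC) ka q :
  \sum_b \sum_kb Fhat alpha phi b kb *
      ketbra (vec2 Psi) ((ka.1, kb.1), (ka.2, kb.2)) ((q.1, b.1), (q.2, b.2))
  = \sum_i alpha i * ketbra (vec2 (contractB Psi (phi i))) ka q.
Proof.
under eq_bigr => b _ do under eq_bigr => kb _ do rewrite /Fhat mulr_suml.
under eq_bigr => b _ do rewrite exchange_big.
rewrite exchange_big; apply: eq_bigr => i _.
rewrite /ketbra !vec2_contractB rmorph_sum big_distrlr /= exchange_big mulr_sumr.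
apply: eq_bigr => b _; rewrite mulr_sumr; apply: eq_bigr => kb _.
by rewrite [(_ * vec2 Psi _)^*]rmorphM /= conjCK; ring.
Qed.

Lemma symP_fix (I : finType) (G : I * I -> algC) p :
  (forall a b, G (a, b) = G (b, a)) -> \sum_k symP p k * G k = G p.
Proof.
move=> G_sym; under eq_bigr do rewrite /symP mulrAC mulrDl.
rewrite -mulr_suml big_split /=.
rewrite [\sum_k opid p k * G k]sum_delta.
have -> : \sum_k swapop p k * G k = G p.
  case: p => a b; rewrite (bigD1 (b, a)) //= /swapop /= !eqxx mul1r -G_sym big1 ?addr0 //.
  move=> [c d] /=; case: (eqVneq a d) => [<-|_]; case: (eqVneq b c) => [<-|_];
    by rewrite ?eqxx ?mul0r.
by field.
Qed.

Lemma ptrB_symP_Fhat (A : finType) n N (alpha : 'I_N -> algC) (phi : 'I_N -> 'I_n -> algC)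
    (Psi : A * 'I_n -> algC) p q :
  ptrB (opmul (opmul (liftAB (@symP A) (@opid ('I_n * 'I_n)%type))
                     (liftAB (@opid (A * A)%type) (Fhat alpha phi)))
              (ketbra (vec2 Psi))) p q
  = \sum_i alpha i * ketbra (vec2 (contractB Psi (phi i))) p q.
Proof.
have -> : ptrB (opmul (opmul (liftAB (@symP A) (@opid _))
                             (liftAB (@opid _) (Fhat alpha phi))) (ketbra (vec2 Psi))) p q
        = ptrB (opmul (liftAB (@symP A) (Fhat alpha phi)) (ketbra (vec2 Psi))) p q.
  by apply: eq_bigr => b _; apply: eq_bigr => k _; rewrite liftAB_mul_id.
rewrite ptrB_liftAB_mul; under eq_bigr do rewrite Fhat_contractB.
apply: (symP_fix (G := fun k => \sum_i alpha i * ketbra (vec2 (contractB Psi (phi i))) k q)).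
by move=> a b; apply: eq_bigr => i _; rewrite /ketbra /vec2 /= (mulrC (contractB _ _ a)).
Qed.

Definition antisym_vec (I : finType) (g p : I * I) : algC :=
  ((p.2, p.1) == g)%:R - (p == g)%:R.

Lemma antiP_gram (I : finType) (p q : I * I) :
  antiP p q = \sum_g antisym_vec g p * antisym_vec g q / 4%:R.
Proof.
rewrite -mulr_suml /antisym_vec.
under eq_bigr => g _ do rewrite mulrBl !mulrBr.
rewrite !sumrB !sum_delta.
case: p q => [p1 p2] [q1 q2]; rewrite /antiP /opid /swapop /= !xpair_eqE.
rewrite !(eq_sym q1) !(eq_sym q2) [(p2 == q2) && _]andbC [(p2 == q1) && _]andbC.
by field.
Qed.

Lemma gram_form_ge0 (X J : finType) (v : X -> algC) (M : X -> X -> algC) (g : J -> X -> algC) :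
  (forall k x, M k x = \sum_j g j k * (g j x)^*) ->
  0 <= \sum_x \sum_k v x * (v k)^* * M k x.
Proof.
move=> M_gram.
have -> : \sum_x \sum_k v x * (v k)^* * M k x =
          \sum_j (\sum_x v x * (g j x)^*) * (\sum_x v x * (g j x)^*)^*.
  under eq_bigr => x _ do under eq_bigr => k _ do rewrite M_gram mulr_sumr.
  under eq_bigr => x _ do rewrite exchange_big.
  rewrite exchange_big; apply: eq_bigr => j _.
  rewrite rmorph_sum /= big_distrlr; apply: eq_bigr => x _; apply: eq_bigr => k _.
  by rewrite rmorphM /= conjCK; ring.
by apply: sumr_ge0 => j _; apply: mul_conjC_ge0.
Qed.

Lemma optr_ketbra_antiP_ge0 (A B : finType) (Psi : A * B -> algC) :
  0 <= optr (opmul (ketbra (vec2 Psi))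
                   (opmul (liftAB (@antiP A) (@opid (B * B)%type))
                          (liftAB (@opid (A * A)%type) (@antiP B)))).
Proof.
rewrite /optr /opmul /ketbra.
under eq_bigr => x _ do under eq_bigr => k _ do rewrite -/(opmul _ _ k x) liftAB_mul_id.
apply: (@gram_form_ge0 _ _ _ _ (fun (j : (A * A) * (B * B)) (k : (A * B) * (A * B)) =>
  antisym_vec j.1 (k.1.1, k.2.1) * antisym_vec j.2 (k.1.2, k.2.2) / 4%:R)).
move=> k x; rewrite /liftAB !antiP_gram big_distrlr pair_bigA /=; apply: eq_bigr => j _.
by rewrite /antisym_vec !rmorphM !rmorphB /= !conjC_nat fmorphV /= conjC_nat; ring.
Qed.

Lemma optr_symP_ge0 (I : finType) : 0 <= optr (@symP I).
Proof. by apply: sumr_ge0 => p _; rewrite /symP divr_ge0 ?addr_ge0 ?ler0n. Qed.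

Lemma optr_Fhat_ge0 n N (alpha : 'I_N -> algC) (phi : 'I_N -> 'I_n -> algC) :
  (forall i, 0 <= alpha i) -> 0 <= optr (Fhat alpha phi).
Proof.
move=> alpha_ge0; apply: sumr_ge0 => p _; apply: sumr_ge0 => i _.
by rewrite mulr_ge0 // mul_conjC_ge0.
Qed.

Theorem mainTheorem13 (m n N : nat) (psi : ('I_m * 'I_n)%type -> algC)
  (alpha : 'I_N -> algC) (phi : 'I_N -> 'I_n -> algC) :
  unitvec psi ->
  (forall i, 0 < alpha i) ->
  (forall i, unitvec (phi i)) ->
  0 < optr (omegabar psi alpha phi) ->
  in_sym_sep_hull (opscale (optr (omegabar psi alpha phi))^-1 (omegabar psi alpha phi)).
Proof.
move=> _ alpha_gt0 _ tr_gt0; apply: symsep_cone_normalized tr_gt0.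
have alpha_ge0 i : 0 <= alpha i by exact/ltW.
apply: symsep_coneD.
  apply: symsep_cone_ext (ptrB_symP_Fhat alpha phi psi) _.
  by apply: symsep_cone_sum => i; apply: symsep_cone_ketbra.
apply: symsep_coneZ (symsep_coneZ _ (symP_symsep_cone _)).
  by rewrite !mulr_ge0 ?invr_ge0 ?optr_ketbra_antiP_ge0 ?optr_Fhat_ge0 ?optr_symP_ge0.
by rewrite invr_ge0 optr_symP_ge0.
Qed.
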